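(* Let $K\ge2$ and consider a random point process on a discrete circle with holes indexed $1,2,\dots,K$ in clockwise order (each hole contains at most one particle), whose law is invariant under rotation, and such that $M:=\mathbb P(\text{there is a particle at hole }K)>0$. Define: $W\in\{1,\dots,K\}$, the smallest index $l$ such that hole $l$ contains a particle; $\mathrm{Sp}_1\in\{1,\dots,K\}$, the length of the arc through hole $K$ between the two consecutive particles surrounding it, namely the first particle clockwise strictly after hole $K$ and the last particle at or counterclockwise before hole $K$; and $\mathrm{Sp}_2\in\{1,\dots,K\}$, defined on the event that hole $K$ contains a particle, as the clockwise distance from hole $K$ to the next hole containing a particle. Let $g(L)=\mathbb P(W=L)$, $f_1(L)=\mathbb P(\mathrm{Sp}_1=L)$, $f_2(L)=\mathbb P(\mathrm{Sp}_2=L\mid\text{particle at hole }K)$, and $\Delta g(L)=g(L+1)-g(L)$ (with $g(K+1)=0$). Then for all $L\in\{1,\dots,K\}$, $$-\Delta g(L)\cdot L=f_1(L),\qquad -\Delta g(L)=M\cdot f_2(L).$$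
   Context: Distances are measured in numbers of steps between adjacent holes along the circle (adjacent holes are at distance 1). If hole $K$ is the only occupied hole, $\mathrm{Sp}_1=\mathrm{Sp}_2=W=K$. *)

(* a point process on K holes = probability distribution
   on the finite set of configurations {ffun 'I_K -> bool}. *)
From mathcomp Require Import all_boot all_order all_algebra.
Set Implicit Arguments. Unset Strict Implicit. Unset Printing Implicit Defensive.
Import Order.TTheory GRing.Theory Num.Theory.
Local Open Scope ring_scope.

(* A configuration: which of the K holes are occupied.
   Hole h (1 <= h <= K) is stored at ordinal index (h %% K): hole K <-> index 0,
   hole l <-> index l for 1 <= l < K. *)
Definition config (K : nat) := {ffun 'I_K -> bool}.

Definition occ (K : nat) (c : config K) (h : nat) : bool :=
  [exists i : 'I_K, (val i == (h %% K)%N) && c i].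

Definition nonempty (K : nat) (c : config K) : bool := [exists i : 'I_K, c i].

Definition rotc (K : nat) (c : config K) : config K :=
  [ffun i : 'I_K => occ c (val i + 1)].

(* W: smallest l in {1..K} such that hole l is occupied (K+1 if none) *)
Definition W (K : nat) (c : config K) : nat :=
  (find (occ c) (iota 1 K)).+1.

Definition back_dist (K : nat) (c : config K) : nat :=
  find (fun b => occ c (K - b)) (iota 0 K).

(* Sp1: the first particle clockwise strictly after hole K is at distance W c
   from hole K; the last particle at or before hole K is at distance back_dist *)
Definition Sp1 (K : nat) (c : config K) : nat := W c + back_dist c.

Definition Sp2 (K : nat) (c : config K) : nat :=
  (find (fun a => occ c (K + a)) (iota 1 K)).+1.

Definition prob (R : numDomainType) (K : nat) (P : {ffun config K -> R})
  (E : pred (config K)) : R := \sum_(c : config K | E c) P c.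

Definition g (R : numDomainType) (K : nat) (P : {ffun config K -> R}) (L : nat) : R :=
  prob P (fun c => nonempty c && (W c == L)).

Definition f1 (R : numDomainType) (K : nat) (P : {ffun config K -> R}) (L : nat) : R :=
  prob P (fun c => nonempty c && (Sp1 c == L)).

Definition M (R : numDomainType) (K : nat) (P : {ffun config K -> R}) : R :=
  prob P (fun c => occ c K).

Definition f2 (R : numFieldType) (K : nat) (P : {ffun config K -> R}) (L : nat) : R :=
  prob P (fun c => occ c K && (Sp2 c == L)) / M P.

(** A gap of length [L] starting at hole [s] (hole [s] occupied, the next
    occupied hole being [s + L]) has, by rotation invariance, a probability
    [p(L)] independent of [s].  The event [W = L] says that the first particle
    after hole [K] is at distance [L]; splitting it according to whether hole
    [K] itself is occupied gives [g(L) = p(L) + g(L + 1)], i.e. [-Δg(L) = p(L)].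
    Conditioning the same event on hole [K] being occupied gives [M f2(L) = p(L)],
    and splitting [Sp1 = L] according to which of the [L] holes of the spanning
    arc precedes hole [K] gives [f1(L) = L p(L)]. *)
From mathcomp Require Import all_boot all_order all_algebra.
From mathcomp Require Import zify.
Import Order.TTheory GRing.Theory Num.Theory.

Set Implicit Arguments.
Unset Strict Implicit.
Unset Printing Implicit Defensive.

Lemma find_eq_take (T : Type) (p : pred T) (x0 : T) (s : seq T) k :
  k < size s -> (find p s == k) = ~~ has p (take k s) && p (nth x0 s k).
Proof.
elim: s k => [|x s IHs] [|k] //= ks; first by case: (p x).
case: (p x) => //=; exact: IHs.
Qed.

Lemma find_iota_eq (p : pred nat) a n k :
  k < n -> (find p (iota a n) == k) = ~~ has p (iota a k) && p (a + k).
Proof.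
move=> kn; rewrite (find_eq_take _ 0) ?size_iota //.
by rewrite take_iota nth_iota // (minn_idPl (ltnW kn)).
Qed.

Section Holes.

Variable K : nat.
Hypothesis K_gt0 : 0 < K.
Implicit Types (c : config K) (s h b m n L : nat).

Definition vacant s m c : bool := ~~ has (occ c) (iota s.+1 m).

Definition next_at s L c : bool := vacant s L.-1 c && occ c (s + L).

Definition gap_at s L c : bool := occ c s && next_at s L c.

Lemma occE c h : occ c h = c (Ordinal (ltn_pmod h K_gt0)).
Proof.
apply/existsP/idP => [[i /andP[/eqP hi ci]]|ci].
  by have -> : Ordinal (ltn_pmod h K_gt0) = i by apply: val_inj; rewrite /= hi.
by exists (Ordinal (ltn_pmod h K_gt0)); rewrite /= eqxx.
Qed.

Lemma occ_ord c (i : 'I_K) : occ c i = c i.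
Proof. by rewrite occE; congr (c _); apply: val_inj; rewrite /= modn_small. Qed.

Lemma occ_addK c h : occ c (K + h) = occ c h.
Proof. by rewrite /occ modnDl. Qed.

Lemma occ_K c : occ c K = occ c 0.
Proof. by rewrite /occ modnn mod0n. Qed.

Lemma occ_rotc c h : occ (rotc c) h = occ c h.+1.
Proof. by rewrite occE /rotc ffunE /occ /= modnDml addn1. Qed.

Lemma rotc_inj : injective (@rotc K).
Proof.
move=> c1 c2 eq_rot; apply/ffunP => i.
have rot_back c : c i = occ (rotc c) (K.-1 + i).
  by rewrite occ_rotc -addSn prednK // occ_addK occ_ord.
by rewrite !rot_back eq_rot.
Qed.

Lemma nonempty_occ c h : occ c h -> nonempty c.
Proof. by rewrite occE => ch; apply/existsP; eexists; exact: ch. Qed.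

Lemma W_le c : nonempty c -> W c <= K.
Proof.
case/existsP=> i ci; have : has (occ c) (iota 1 K).
  apply/hasP; exists (if i == 0 :> nat then K else i).
    by rewrite mem_iota; case: eqP => i0; have := ltn_ord i; lia.
  case: eqP => [i0|_]; last by rewrite occ_ord.
  by rewrite occ_K -i0 occ_ord.
by rewrite has_find size_iota.
Qed.

Lemma vacant_rotc s m c : vacant s m (rotc c) = vacant s.+1 m c.
Proof.
rewrite /vacant -[s.+2]add1n iotaDl has_map; congr (~~ _).
by apply: eq_has => h; rewrite /= occ_rotc add1n.
Qed.

Lemma next_at_rotc s L c : next_at s L (rotc c) = next_at s.+1 L c.
Proof. by rewrite /next_at vacant_rotc occ_rotc addSn. Qed.

Lemma gap_at_rotc s L c : gap_at s L (rotc c) = gap_at s.+1 L c.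
Proof. by rewrite /gap_at next_at_rotc occ_rotc. Qed.

Lemma next_at_addK s L c : next_at (K + s) L c = next_at s L c.
Proof.
rewrite /next_at /vacant -addnS iotaDl has_map -addnA occ_addK; congr (~~ _ && _).
by apply: eq_has => h; rewrite /= occ_addK.
Qed.

Lemma next_at_cat s m n c :
  0 < n -> vacant s m c && next_at (s + m) n c = next_at s (m + n) c.
Proof.
move=> n_gt0; rewrite /next_at /vacant -(prednK n_gt0) !addnS /=.
by rewrite iotaD has_cat negb_or andbA addSn addnA.
Qed.

Lemma next_at_long s L c : K < L -> next_at s L c = false.
Proof.
move=> KL; apply/negP => /andP[/hasP no_occ occL]; apply: no_occ.
exists (s + (L - K)); first by rewrite mem_iota; lia.
by rewrite -occ_addK; have -> : K + (s + (L - K)) = s + L by lia.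
Qed.

Lemma W_next_at c L : 0 < L -> nonempty c && (W c == L) = next_at 0 L c.
Proof.
move=> L_gt0; case: (leqP L K) => [LK|KL]; last first.
  rewrite next_at_long //; case ne: (nonempty c) => //=.
  by apply/negbTE; have := W_le ne; lia.
rewrite /W -{1}(prednK L_gt0) eqSS find_iota_eq; last lia.
rewrite add1n prednK // andb_idl // => /andP[_]; exact: nonempty_occ.
Qed.

Lemma back_dist_eq c b :
  b < K -> (back_dist c == b) = occ c (K - b) && vacant (K - b) b c.
Proof.
move=> bK; rewrite /back_dist find_iota_eq // add0n andbC; congr (_ && ~~ _).
apply/hasP/hasP => -[j]; rewrite mem_iota => jb occj.
  by exists (K - j); rewrite // mem_iota; lia.
by exists (K - j); [rewrite mem_iota; lia | rewrite subKn //; lia].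
Qed.

Lemma Sp1_back_dist_gap_at c L b : b < L <= K ->
  nonempty c && (Sp1 c == L) && (back_dist c == b) = gap_at (K - b) L c.
Proof.
case/andP=> bL LK; rewrite -andbA.
have -> : (Sp1 c == L) && (back_dist c == b) = (W c == L - b) && (back_dist c == b).
  by rewrite /Sp1; apply/andP/andP => -[/eqP Sp1L /eqP back_b]; split; apply/eqP; lia.
rewrite andbA W_next_at ?subn_gt0 // back_dist_eq; last lia.
have -> : next_at 0 (L - b) c = next_at (K - b + b) (L - b) c.
  by rewrite subnK; [rewrite -(next_at_addK 0) addn0 | lia].
by rewrite andbCA [next_at _ _ _ && _]andbC next_at_cat ?subn_gt0 // subnKC // ltnW.
Qed.

Lemma Sp2_gap_at c L : 0 < L -> occ c K && (Sp2 c == L) = gap_at 0 L c.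
Proof.
move=> L_gt0; have -> : Sp2 c = W c.
  by rewrite /Sp2 /W; congr _.+1; apply: eq_find => a; rewrite occ_addK.
rewrite /gap_at -W_next_at // occ_K.
by case occ0: (occ c 0); rewrite //= (nonempty_occ occ0).
Qed.

End Holes.

Local Open Scope ring_scope.

Section Probability.

Variables (R : numDomainType) (K : nat) (P : {ffun config K -> R}).
Implicit Types E : pred (config K).

Lemma eq_prob E1 E2 : E1 =1 E2 -> prob P E1 = prob P E2.
Proof. by move=> eqE; apply: eq_bigl. Qed.

Lemma prob_partition E (h : config K -> nat) n :
  (forall c, E c -> (h c <= n)%N) ->
  prob P E = \sum_(b < n.+1) prob P (fun c => E c && (h c == b)).
Proof.
move=> h_le; rewrite /prob (partition_big (fun c => inord (h c) : 'I_n.+1) xpredT) //.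
apply: eq_bigr => b _; apply: eq_bigl => c; case Ec: (E c) => //=.
apply/eqP/eqP => [<-|hb]; first by rewrite inordK // ltnS h_le.
by apply: val_inj; rewrite /= hb inordK.
Qed.

Lemma prob_next_at_split s L : (0 < L)%N ->
  prob P (next_at s.+1 L) = prob P (gap_at s.+1 L) + prob P (next_at s L.+1).
Proof.
move=> L_gt0; rewrite /prob (bigID (fun c => occ c s.+1)) /=.
congr (_ + _); apply: eq_bigl => c; first by rewrite andbC.
by rewrite -[L.+1]add1n -next_at_cat // addn1 /vacant /= orbF andbC.
Qed.

Hypotheses (K_gt0 : (0 < K)%N) (P_rot : forall c, P (rotc c) = P c).

Lemma prob_rotc E : prob P (fun c => E (rotc c)) = prob P E.
Proof.
rewrite /prob [RHS](reindex_inj (rotc_inj K_gt0)) /=.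
by apply: eq_bigr => c _; rewrite P_rot.
Qed.

Lemma prob_shift (E : nat -> pred (config K)) :
  (forall s c, E s (rotc c) = E s.+1 c) -> forall s, prob P (E s) = prob P (E 0%N).
Proof.
move=> E_rot; elim=> // s <-; rewrite -[RHS]prob_rotc.
by apply: eq_prob => c; rewrite E_rot.
Qed.

Lemma prob_next_at s L : prob P (next_at s L) = prob P (next_at 0 L).
Proof.
by apply: (prob_shift (E := fun s => next_at s L)) => s' c; apply: next_at_rotc.
Qed.

Lemma prob_gap_at s L : prob P (gap_at s L) = prob P (gap_at 0 L).
Proof.
by apply: (prob_shift (E := fun s => gap_at s L)) => s' c; apply: gap_at_rotc.
Qed.

Lemma g_next_at L : (0 < L)%N -> g P L = prob P (next_at 0 L).
Proof. by move=> L_gt0; apply: eq_prob => c; rewrite W_next_at. Qed.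

Lemma g_step L : (0 < L)%N -> g P L - g P L.+1 = prob P (gap_at 0 L).
Proof.
move=> L_gt0; rewrite !g_next_at // -(prob_next_at 1) prob_next_at_split //.
by rewrite addrK prob_gap_at.
Qed.

Lemma f1_gap_at L : (0 < L <= K)%N -> f1 P L = prob P (gap_at 0 L) *+ L.
Proof.
case: L => // L /andP[_ LK].
rewrite /f1 (prob_partition (h := @back_dist K) (n := L)); last first.
  by move=> c /andP[_ /eqP]; rewrite /Sp1 /W; lia.
rewrite (eq_bigr (fun _ => prob P (gap_at 0 L.+1))) ?sumr_const ?card_ord // => b _.
rewrite -(prob_gap_at (K - b)); apply: eq_prob => c.
by apply: Sp1_back_dist_gap_at => //; have := ltn_ord b; lia.
Qed.

End Probability.

Theorem proposition4p2 (R : realFieldType) (K : nat) (hK : (2 <= K)%N)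
  (P : {ffun config K -> R})
  (P_ge0 : forall c, 0 <= P c)
  (P_sum1 : \sum_(c : config K) P c = 1)
  (P_rot : forall c, P (rotc c) = P c)
  (M_pos : 0 < M P) :
  forall L : nat, (1 <= L <= K)%N ->
    - (g P L.+1 - g P L) * L%:R = f1 P L /\
    - (g P L.+1 - g P L) = M P * f2 P L.
Proof.
move=> L /andP[L_gt0 LK]; have K_gt0 : (0 < K)%N by lia.
rewrite opprB g_step //; split.
  by rewrite (f1_gap_at K_gt0 P_rot) ?L_gt0 // mulr_natr.
rewrite /f2 mulrC divfK ?gt_eqF //; apply: eq_prob => c.
by rewrite Sp2_gap_at.
Qed.
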